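(* Let $a>1$, $C_j(n,a)=\binom{n}{j}\left(\frac{1+a}{2}\right)^{n-j}\left(\frac{1-a}{2}\right)^j$, $F_n(x,a)=\sum_{j=0}^nC_j(n,a)e^{i(1-\frac{2j}{n})x}$, and $\mathtt{H}_{k,n}(x)=h_k(x)F_n(x,a)$ for $k\geq0$, $n\geq1$. Then for every $z\in\mathbb{C}$, $$\mathcal{B}(\mathtt{H}_{k,n})(z)=\frac{1}{\sqrt{k!}}\sum_{j=0}^nC_j(n,a)\left(z+\tfrac{i}{\sqrt2}(1-2j/n)\right)^k e^{\frac{iz}{\sqrt2}(1-2j/n)-\frac14(1-2j/n)^2}.$$
   Context: $h_k(x)=(2^kk!\sqrt\pi)^{-1/2}H_k(x)e^{-x^2/2}$ are the normalized Hermite functions, $H_k(x)=(-1)^ke^{x^2}\frac{d^k}{dx^k}e^{-x^2}$. $\mathcal{B}(\varphi)(z)=\pi^{-1/4}\int_{\mathbb{R}}e^{-\frac12(z^2+x^2)+\sqrt2 zx}\varphi(x)\,dx$ is the Segal-Bargmann transform; it satisfies $\mathcal{B}(h_k)(z)=z^k/\sqrt{k!}$. *)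

From Stdlib Require Import Reals Factorial.
From Coquelicot Require Import Coquelicot.

Open Scope R_scope.

Definition cexp (w : C) : C :=
  (exp (Re w) * cos (Im w), exp (Re w) * sin (Im w)).

Definition hermiteH (k : nat) (x : R) : R :=
  (-1) ^ k * exp (x ^ 2) * Derive_n (fun t => exp (- t ^ 2)) k x.

Definition hermite_fun (k : nat) (x : R) : R :=
  / sqrt (2 ^ k * INR (fact k) * sqrt PI) * hermiteH k x * exp (- x ^ 2 / 2).

Definition SB_integrand (phi : R -> C) (z : C) (x : R) : C :=
  (RtoC (/ Rpower PI (1/4)) *
   cexp (- (z * z + RtoC (x * x)) / RtoC 2 + RtoC (sqrt 2) * z * RtoC x)
   * phi x)%C.

Definition is_SegalBargmann (phi : R -> C) (z v : C) : Prop :=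
  @is_RInt_gen C_R_NormedModule (SB_integrand phi z) (Rbar_locally m_infty) (Rbar_locally p_infty) v.

Definition Ccoef (n j : nat) (a : R) : R :=
  Binomial.C n j * ((1 + a) / 2) ^ (n - j) * ((1 - a) / 2) ^ j.

Definition lam (n j : nat) : R := 1 - 2 * INR j / INR n.

Definition Fn (n : nat) (x a : R) : C :=
  sum_n (fun j => (RtoC (Ccoef n j a) * cexp (Ci * RtoC (lam n j * x)))%C) n.

Definition Hkn (k n : nat) (a : R) (x : R) : C :=
  (RtoC (hermite_fun k x) * Fn n x a)%C.

(* Expanding [F_n], the Segal-Bargmann integrand of [H_{k,n}] is a combination of the
   functions [x |-> e^{b x} (d/dx)^k e^{-x^2}] with [b = sqrt 2 z + i (1 - 2j/n)].
   Integrating by parts [k] times, [int e^{b x} (d/dx)^k e^{-x^2} = (-b)^k int e^{b x - x^2}],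
   and [int e^{b x - x^2} = sqrt PI e^{b^2/4}]: on a finite interval, [G t = int e^{t b x - x^2}]
   solves [G' = (t b^2 / 2) G] up to boundary terms, so [e^{-t^2 b^2/4} G t] differs from the
   real Gaussian integral [G 0] by an error that vanishes as the interval grows.  The real
   Gaussian integral comes from the constancy of
   [(int_0^T e^{-x^2})^2 + int_0^1 e^{-T^2 (1 + y^2)} / (1 + y^2) dy].
   Finally [(-b)^k = (- sqrt 2)^k (z + i l / sqrt 2)^k] and
   [e^{-z^2/2} e^{b^2/4} = e^{i z l / sqrt 2 - l^2/4}] produce the stated formula. *)

From Pilot Require Import Defs.
From Stdlib Require Import Reals Factorial Lra Lia.
From Coquelicot Require Import Coquelicot.

Open Scope R_scope.

Ltac retype_eq T := match goal with |- ?a = ?b => change (@eq T a b) end.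

Ltac auto_derive_eq := auto_derive; auto; unfold Rminus, Rdiv; simpl pow; field.

Lemma exp_le x y : x <= y -> exp x <= exp y.
Proof. intros [H | ->]; [apply Rlt_le, exp_increasing, H | apply Rle_refl]. Qed.

Lemma pow_one_plus_le_exp (y : R) (m : nat) : 0 <= y -> (1 + y) ^ m <= exp (INR m * y).
Proof.
  intros Hy. induction m as [|m IH].
  - simpl. rewrite Rmult_0_l, exp_0. lra.
  - rewrite S_INR. replace ((INR m + 1) * y) with (y + INR m * y) by ring.
    rewrite exp_plus. simpl.
    apply Rmult_le_compat; try lra.
    + apply pow_le; lra.
    + pose proof (exp_ineq1_le y). lra.
Qed.

Lemma continuity_2d_pt_comp_derivable (f : R -> R) (h : R -> R -> R) x y :
  derivable f -> continuity_2d_pt h x y -> continuity_2d_pt (fun u v => f (h u v)) x y.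
Proof. intros Hf Hh. apply continuity_1d_2d_pt_comp; [apply derivable_continuous_pt, Hf | exact Hh]. Qed.

Lemma continuity_2d_pt_pow (h : R -> R -> R) n x y :
  continuity_2d_pt h x y -> continuity_2d_pt (fun u v => h u v ^ n) x y.
Proof.
  intros H. induction n as [|n IH].
  - apply (continuity_2d_pt_ext (fun _ _ => 1)); [reflexivity | apply continuity_2d_pt_const].
  - apply (continuity_2d_pt_mult h (fun u v => h u v ^ n)); assumption.
Qed.

Ltac continuity_2d := repeat first
  [ apply continuity_2d_pt_id1 | apply continuity_2d_pt_id2 | apply continuity_2d_pt_const
  | apply continuity_2d_pt_mult | apply continuity_2d_pt_plus | apply continuity_2d_pt_minus
  | apply continuity_2d_pt_opp | apply continuity_2d_pt_pow
  | apply (continuity_2d_pt_comp_derivable exp); [exact derivable_exp|]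
  | apply (continuity_2d_pt_comp_derivable cos); [exact derivable_cos|]
  | apply (continuity_2d_pt_comp_derivable sin); [exact derivable_sin|] ].

Lemma continuous_of_ex_derive (f : R -> R) x : ex_derive f x -> continuous f x.
Proof. apply (ex_derive_continuous (K := R_AbsRing) (V := R_NormedModule)). Qed.

Lemma is_derive_eq (f : R -> R) x l1 l2 : is_derive f x l1 -> l1 = l2 -> is_derive f x l2.
Proof. intros H <-. exact H. Qed.

Lemma Rabs_increment_le (h dh : R -> R) (B : R) :
  (forall t, is_derive h t (dh t)) -> (forall t, 0 <= t <= 1 -> Rabs (dh t) <= B) ->
  Rabs (h 1 - h 0) <= B.
Proof.
  intros Hd HB. destruct (MVT_gen h 0 1 dh) as [c [Hc E]].
  - intros; apply Hd.
  - intros x _. apply continuity_pt_filterlim, continuous_of_ex_derive. eexists; apply Hd.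
  - rewrite Rmin_left, Rmax_right in Hc by lra.
    rewrite E, Rminus_0_r, Rmult_1_r. apply HB, Hc.
Qed.

Lemma Rabs_mul_plus_mul_le p q r s W Z :
  Rabs p <= W -> Rabs q <= Z -> Rabs r <= W -> Rabs s <= Z -> Rabs (p * q + r * s) <= 2 * W * Z.
Proof.
  intros Hp Hq Hr Hs. eapply Rle_trans; [apply Rabs_triang|]. rewrite !Rabs_mult.
  pose proof (Rabs_pos p). pose proof (Rabs_pos q). pose proof (Rabs_pos r). pose proof (Rabs_pos s).
  assert (Rabs p * Rabs q <= W * Z) by (apply Rmult_le_compat; assumption).
  assert (Rabs r * Rabs s <= W * Z) by (apply Rmult_le_compat; assumption).
  lra.
Qed.

Lemma Rabs_half_lin_comb_le a b x y E :
  Rabs x <= E -> Rabs y <= E -> Rabs ((a * x + b * y) / 2) <= (Rabs a + Rabs b) * E.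
Proof.
  intros Hx Hy. unfold Rdiv. rewrite Rabs_mult, (Rabs_pos_eq (/ 2)) by lra.
  assert (Rabs (a * x + b * y) <= Rabs a * E + Rabs b * E).
  { eapply Rle_trans; [apply Rabs_triang|]. rewrite !Rabs_mult.
    apply Rplus_le_compat; apply Rmult_le_compat_l; auto; apply Rabs_pos. }
  pose proof (Rabs_pos (a * x + b * y)). lra.
Qed.

(** * Limits at infinity *)

Definition at_infinity (P : R -> Prop) : Prop := exists N, forall x, N < Rabs x -> P x.

Global Instance at_infinity_filter : Filter at_infinity.
Proof.
  constructor.
  - exists 0. auto.
  - intros P Q [N HP] [M HQ]. exists (Rmax N M). intros x Hx.
    pose proof (Rmax_l N M). pose proof (Rmax_r N M).
    split; [apply HP | apply HQ]; lra.
  - intros P Q HPQ [N HP]. exists N. auto.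
Qed.

Lemma at_infinity_le_p_infty : filter_le (Rbar_locally p_infty) at_infinity.
Proof.
  intros P [N HP]. exists (Rabs N). intros x Hx. apply HP.
  pose proof (Rle_abs N). pose proof (Rle_abs x). lra.
Qed.

Lemma at_infinity_le_m_infty : filter_le (Rbar_locally m_infty) at_infinity.
Proof.
  intros P [N HP]. exists (- Rabs N). intros x Hx. apply HP.
  pose proof (Rle_abs N). pose proof (Rle_abs (- x)) as Hx'. rewrite Rabs_Ropp in Hx'. lra.
Qed.

Lemma filterlim_0_of_Rabs_lt {T} {F : (T -> Prop) -> Prop} {FF : Filter F} (f : T -> R) :
  (forall eps : posreal, F (fun x => Rabs (f x) < eps)) -> filterlim f F (locally 0).
Proof.
  intros H. apply (proj2 (filterlim_locally_ball_norm (K := R_AbsRing) f 0)). intros eps.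
  eapply filter_imp; [|apply (H eps)]. intros x Hx. unfold ball_norm.
  change (Rabs (f x + - 0) < eps). rewrite Ropp_0, Rplus_0_r. exact Hx.
Qed.

Lemma filterlim_of_norm_le {T} {K : AbsRing} {V : NormedModule K}
  {F : (T -> Prop) -> Prop} {FF : Filter F} (f : T -> V) (g : T -> R) (l : V) :
  F (fun x => norm (minus (f x) l) <= g x) -> filterlim g F (locally 0) ->
  filterlim f F (locally l).
Proof.
  intros Hle Hg. apply (proj2 (filterlim_locally_ball_norm (K := K) f l)). intros eps.
  generalize (filter_and _ _ Hle (proj1 (filterlim_locally_ball_norm g 0) Hg eps)).
  apply filter_imp. intros x [H1 H2]. unfold ball_norm in *.
  change (Rabs (g x + - 0) < eps) in H2. rewrite Ropp_0, Rplus_0_r in H2.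
  pose proof (Rle_abs (g x)). lra.
Qed.

Lemma filterlim_mult_0 {T} {F : (T -> Prop) -> Prop} {FF : Filter F} (c : R) (g : T -> R) :
  filterlim g F (locally 0) -> filterlim (fun x => c * g x) F (locally 0).
Proof.
  intros H.
  pose proof (filterlim_comp _ _ _ g (fun y => scal c y) _ _ _ H (filterlim_scal_r c 0)) as Hc.
  change (scal c 0) with (c * 0) in Hc. rewrite Rmult_0_r in Hc. exact Hc.
Qed.

Lemma filterlim_prod_plus {T U : Type} {K : AbsRing} {V : NormedModule K}
  {Fa : (T -> Prop) -> Prop} {Fb : (U -> Prop) -> Prop} {FFa : Filter Fa} {FFb : Filter Fb}
  (Ga : T -> V) (Gb : U -> V) (la lb : V) :
  filterlim Ga Fa (locally la) -> filterlim Gb Fb (locally lb) ->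
  filterlim (fun uv => plus (Ga (fst uv)) (Gb (snd uv))) (filter_prod Fa Fb) (locally (plus la lb)).
Proof.
  intros Ha Hb.
  apply (filterlim_comp_2 (G := locally la) (H := locally lb)
    (fun uv => Ga (fst uv)) (fun uv => Gb (snd uv)) plus).
  - exact (filterlim_comp _ _ _ fst Ga _ _ _ filterlim_fst Ha).
  - exact (filterlim_comp _ _ _ snd Gb _ _ _ filterlim_snd Hb).
  - apply filterlim_plus.
Qed.

Lemma poly_gauss_decay (m : nat) (c : R) : 0 <= c ->
  filterlim (fun x => (1 + Rabs x) ^ m * exp (c * Rabs x - x ^ 2)) at_infinity (locally 0).
Proof.
  intros Hc. apply filterlim_0_of_Rabs_lt. intros [eps Heps]. cbn [pos].
  set (K := INR m + c).
  assert (HK : 0 <= K) by (unfold K; pose proof (pos_INR m); lra).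
  exists (K + 1 + Rabs (ln eps)). intros x Hx.
  rewrite <- pow2_abs. set (y := Rabs x) in *.
  assert (Hy : 0 <= y) by apply Rabs_pos.
  rewrite Rabs_pos_eq by (apply Rmult_le_pos; [apply pow_le; lra | apply Rlt_le, exp_pos]).
  eapply Rle_lt_trans.
  { apply Rmult_le_compat_r. apply Rlt_le, exp_pos. apply pow_one_plus_le_exp; exact Hy. }
  rewrite <- exp_plus, <- (exp_ln eps Heps). apply exp_increasing.
  pose proof (Rle_abs (- ln eps)) as Hl. rewrite Rabs_Ropp in Hl.
  assert (K * y - y ^ 2 <= - y).
  { assert (0 <= y * (y - K - 1)) by (pose proof (Rabs_pos (ln eps)); apply Rmult_le_pos; lra).
    replace (y ^ 2) with (y * y) by ring. lra. }
  unfold K in *. lra.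
Qed.

(** * Complex-valued integrals *)

Lemma cexp_plus p q : cexp (p + q)%C = (cexp p * cexp q)%C.
Proof.
  unfold cexp. destruct p as [p1 p2], q as [q1 q2]. simpl.
  rewrite exp_plus, cos_plus, sin_plus.
  apply injective_projections; simpl; ring.
Qed.

Lemma cexp_RtoC r : cexp (RtoC r) = RtoC (exp r).
Proof.
  unfold cexp, RtoC. simpl. rewrite cos_0, sin_0.
  apply injective_projections; simpl; ring.
Qed.

Lemma Cmod_cexp w : Cmod (cexp w) = exp (Re w).
Proof.
  unfold Cmod, cexp. cbn [fst snd].
  replace ((exp (Re w) * cos (Im w)) ^ 2 + (exp (Re w) * sin (Im w)) ^ 2)
    with (exp (Re w) ^ 2 * (sin (Im w) ^ 2 + cos (Im w) ^ 2)) by ring.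
  rewrite <- !Rsqr_pow2, sin2_cos2, Rmult_1_r.
  apply sqrt_Rsqr, Rlt_le, exp_pos.
Qed.

Lemma norm_C_R_minus_0 (z : C) :
  @norm R_AbsRing C_R_NormedModule
    (@minus (NormedModule.AbelianGroup R_AbsRing C_R_NormedModule) z (RtoC 0)) = Cmod z.
Proof.
  change (sqrt (Rabs (fst (z - RtoC 0)%C) ^ 2 + Rabs (snd (z - RtoC 0)%C) ^ 2) = Cmod z).
  rewrite !pow2_abs. replace (z - RtoC 0)%C with z by ring. reflexivity.
Qed.

Lemma Cmod_le_Rabs_Re_Im (z : C) : Cmod z <= Rabs (Re z) + Rabs (Im z).
Proof.
  pose proof (Rabs_pos (Re z)). pose proof (Rabs_pos (Im z)).
  unfold Cmod. rewrite <- (sqrt_square (Rabs (Re z) + Rabs (Im z))) by lra.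
  apply sqrt_le_1_alt. rewrite <- (pow2_abs (fst z)), <- (pow2_abs (snd z)).
  unfold Re, Im in *. nra.
Qed.

Lemma filterlim_RtoC (x : R) : filterlim RtoC (locally x) (locally (RtoC x)).
Proof.
  intros P [eps HP]. exists eps. intros y Hy. apply HP.
  apply C_NormedModule_mixin_compat1. change (Cmod (RtoC y - RtoC x) < eps).
  rewrite <- RtoC_minus, Cmod_R. exact Hy.
Qed.

Lemma filterlim_Cmult_l (c l : C) :
  filterlim (fun y => (c * y)%C) (@locally C_R_NormedModule l) (locally (c * l)%C).
Proof. exact (filterlim_scal_r (V := C_NormedModule) c l). Qed.

Lemma is_RInt_C_pair (f : R -> C) u v (l : C) :
  is_RInt (fun t => Re (f t)) u v (Re l) -> is_RInt (fun t => Im (f t)) u v (Im l) ->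
  @is_RInt C_R_NormedModule f u v l.
Proof.
  intros H1 H2. destruct l as [l1 l2].
  apply (is_RInt_fct_extend_pair (U := R_NormedModule) (V := R_NormedModule) f u v l1 l2);
    assumption.
Qed.

Lemma is_RInt_Cmult (c : C) (f : R -> C) u v (l : C) :
  @is_RInt C_R_NormedModule f u v l ->
  @is_RInt C_R_NormedModule (fun t => c * f t)%C u v (c * l)%C.
Proof.
  intros H.
  pose proof (is_RInt_fct_extend_fst (U := R_NormedModule) (V := R_NormedModule) f u v l H) as HRe.
  pose proof (is_RInt_fct_extend_snd (U := R_NormedModule) (V := R_NormedModule) f u v l H) as HIm.
  apply is_RInt_C_pair.
  - apply (is_RInt_ext (fun t => Re c * Re (f t) - Im c * Im (f t))).
    { intros; unfold Re, Im; simpl; ring. }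
    replace (Re (c * l)%C) with (Re c * Re l - Im c * Im l) by (unfold Re, Im; simpl; ring).
    apply (is_RInt_minus (V := R_NormedModule)); apply (is_RInt_scal (V := R_NormedModule)); assumption.
  - apply (is_RInt_ext (fun t => Re c * Im (f t) + Im c * Re (f t))).
    { intros; unfold Re, Im; simpl; ring. }
    replace (Im (c * l)%C) with (Re c * Im l + Im c * Re l) by (unfold Re, Im; simpl; ring).
    apply (is_RInt_plus (V := R_NormedModule)); apply (is_RInt_scal (V := R_NormedModule)); assumption.
Qed.

Section ImproperIntegrals.

Context {Fa Fb : (R -> Prop) -> Prop} {FFa : Filter Fa} {FFb : Filter Fb}.

Lemma is_RInt_gen_ext_everywhere {V : NormedModule R_AbsRing} (f g : R -> V) (l : V) :
  (forall x, f x = g x) -> is_RInt_gen f Fa Fb l -> is_RInt_gen g Fa Fb l.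
Proof. intros E. apply is_RInt_gen_ext, filter_forall. intros; apply E. Qed.

Lemma is_RInt_gen_of_primitive {V : NormedModule R_AbsRing} (f : R -> V) (F : R -> R -> V) (l : V) :
  (forall u v, is_RInt f u v (F u v)) ->
  filterlim (fun uv => F (fst uv) (snd uv)) (filter_prod Fa Fb) (locally l) ->
  is_RInt_gen f Fa Fb l.
Proof.
  intros HF Hl P HP. unfold filtermapi. generalize (Hl P HP). unfold filtermap. apply filter_imp.
  intros [u v] Hp. exists (F u v). split; [apply HF | exact Hp].
Qed.

Lemma is_RInt_gen_of_antiderivative {V : NormedModule R_AbsRing} (f G : R -> V) (la lb : V) :
  (forall u v, is_RInt f u v (minus (G v) (G u))) ->
  filterlim G Fa (locally la) -> filterlim G Fb (locally lb) ->
  is_RInt_gen f Fa Fb (minus lb la).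
Proof.
  intros HG Ha Hb. apply (is_RInt_gen_of_primitive f (fun u v => minus (G v) (G u))); [exact HG|].
  apply (filterlim_ext (fun uv => plus (opp (G (fst uv))) (G (snd uv)))).
  { intros; apply plus_comm. }
  unfold minus. rewrite plus_comm.
  exact (filterlim_prod_plus (fun u => opp (G u)) G _ _
           (filterlim_comp _ _ _ G opp _ _ _ Ha (filterlim_opp la)) Hb).
Qed.

Lemma is_RInt_gen_Cmult (c : C) (f : R -> C) (l : C) :
  @is_RInt_gen C_R_NormedModule f Fa Fb l ->
  @is_RInt_gen C_R_NormedModule (fun t => c * f t)%C Fa Fb (c * l)%C.
Proof.
  intros H P HP. specialize (H _ (filterlim_Cmult_l c l P HP)).
  unfold filtermapi in *. revert H. apply filter_imp. intros [u v] [y [Hy Py]].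
  exists (c * y)%C. split; [apply is_RInt_Cmult|]; assumption.
Qed.

Lemma is_RInt_gen_sum_n {V : NormedModule R_AbsRing} (f : nat -> R -> V) (l : nat -> V) n :
  (forall j, (j <= n)%nat -> is_RInt_gen (f j) Fa Fb (l j)) ->
  is_RInt_gen (fun x => sum_n (fun j => f j x) n) Fa Fb (sum_n l n).
Proof.
  induction n as [|n IH]; intros H.
  - rewrite sum_O. apply (is_RInt_gen_ext_everywhere (f 0%nat)); [|apply H; lia].
    intros; rewrite sum_O; reflexivity.
  - rewrite sum_Sn. eapply is_RInt_gen_ext_everywhere; [|apply is_RInt_gen_plus; [apply IH|apply H]].
    + intros x. rewrite sum_Sn. reflexivity.
    + intros j Hj. apply H. lia.
    + lia.
Qed.

End ImproperIntegrals.

(** * Derivatives of the Gaussian *)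

Definition gauss (x : R) : R := exp (- x ^ 2).

Definition gauss_deriv (m : nat) : R -> R := Derive_n gauss m.

Lemma gauss_deriv_S m x : gauss_deriv (S m) x = Derive (gauss_deriv m) x.
Proof. reflexivity. Qed.

Lemma gauss_deriv_1 x : gauss_deriv 1 x = -2 * x * gauss x.
Proof.
  rewrite gauss_deriv_S. apply is_derive_unique. unfold gauss_deriv, gauss; simpl.
  auto_derive; auto. ring.
Qed.

Lemma gauss_deriv_smooth_rec m :
  (forall x, ex_derive (gauss_deriv m) x) /\ (forall x, ex_derive (gauss_deriv (S m)) x) /\
  (forall x, gauss_deriv (S (S m)) x =
             -2 * x * gauss_deriv (S m) x - 2 * INR (S m) * gauss_deriv m x).
Proof.
  induction m as [|m [H0 [H1 H2]]].
  - assert (E1 : forall x, -2 * x * gauss x = gauss_deriv 1 x) by (intros; symmetry; apply gauss_deriv_1).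
    split; [|split].
    + intros x. unfold gauss_deriv, gauss; simpl. auto_derive; auto.
    + intros x. apply (ex_derive_ext _ _ _ E1). unfold gauss; auto_derive; auto.
    + intros x. rewrite gauss_deriv_S, <- (Derive_ext _ _ _ E1), gauss_deriv_1.
      apply is_derive_unique. change (gauss_deriv 0 x) with (gauss x). unfold gauss.
      auto_derive; auto. simpl. ring.
  - split; [exact H1 | split].
    + intros x. eapply ex_derive_ext; [intros t; symmetry; apply H2|].
      auto_derive. repeat split; auto.
    + intros x. rewrite (gauss_deriv_S (S (S m))).
      rewrite (Derive_ext _ (fun x => -2 * x * gauss_deriv (S m) x - 2 * INR (S m) * gauss_deriv m x))
        by apply H2.
      set (r := INR (S m)).
      apply is_derive_unique. auto_derive. repeat split; auto.
      rewrite <- !gauss_deriv_S. unfold r. rewrite (S_INR (S m)). ring.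
Qed.

Lemma ex_derive_gauss_deriv m x : ex_derive (gauss_deriv m) x.
Proof. apply (gauss_deriv_smooth_rec m). Qed.

Lemma gauss_deriv_SS m x :
  gauss_deriv (S (S m)) x = -2 * x * gauss_deriv (S m) x - 2 * INR (S m) * gauss_deriv m x.
Proof. apply (gauss_deriv_smooth_rec m). Qed.

Definition gauss_dominated (m : nat) (f : R -> R) : Prop :=
  exists M, 0 <= M /\ forall x, Rabs (f x) <= M * (1 + Rabs x) ^ m * gauss x.

Lemma gauss_dominated_SS m :
  gauss_dominated m (gauss_deriv m) -> gauss_dominated (S m) (gauss_deriv (S m)) ->
  gauss_dominated (S (S m)) (gauss_deriv (S (S m))).
Proof.
  intros [M0 [HM0 B0]] [M1 [HM1 B1]].
  pose proof (pos_INR (S m)) as Hr.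
  exists (2 * M1 + 2 * INR (S m) * M0). split; [nra|].
  intros x. rewrite gauss_deriv_SS.
  specialize (B0 x). specialize (B1 x).
  set (r := INR (S m)) in *. set (y := Rabs x) in *. set (E := gauss x) in *.
  set (d0 := gauss_deriv m x) in *. set (d1 := gauss_deriv (S m) x) in *.
  change ((1 + y) ^ S m) with ((1 + y) * (1 + y) ^ m) in B1.
  change ((1 + y) ^ S (S m)) with ((1 + y) * ((1 + y) * (1 + y) ^ m)).
  set (p := (1 + y) ^ m) in *.
  assert (HE : 0 < E) by apply exp_pos.
  assert (Hy : 0 <= y) by apply Rabs_pos.
  assert (Hp : 0 <= p) by (apply pow_le; lra).
  assert (Htri : Rabs (-2 * x * d1 - 2 * r * d0) <= 2 * y * Rabs d1 + 2 * r * Rabs d0).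
  { unfold Rminus. eapply Rle_trans; [apply Rabs_triang|].
    rewrite Rabs_Ropp, !Rabs_mult, (Rabs_left (-2)), (Rabs_pos_eq 2), (Rabs_pos_eq r) by lra.
    fold y. lra. }
  assert (2 * y * Rabs d1 <= 2 * (1 + y) * (M1 * ((1 + y) * p) * E)).
  { apply Rmult_le_compat; try nra. apply Rabs_pos. }
  assert (HM0p : 0 <= M0 * p * E) by (apply Rmult_le_pos; [apply Rmult_le_pos|]; lra).
  assert (2 * r * Rabs d0 <= 2 * r * ((1 + y) * (1 + y) * (M0 * p * E))).
  { apply Rmult_le_compat_l; [lra|]. assert (1 <= (1 + y) * (1 + y)) by nra. nra. }
  assert (0 <= M1 * p * E) by (apply Rmult_le_pos; [apply Rmult_le_pos|]; lra).
  nra.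
Qed.

Lemma gauss_deriv_dominated m : gauss_dominated m (gauss_deriv m).
Proof.
  enough (H : gauss_dominated m (gauss_deriv m) /\ gauss_dominated (S m) (gauss_deriv (S m)))
    by apply H.
  induction m as [|m [H0 H1]]; [split|split; [exact H1 | apply gauss_dominated_SS; assumption]].
  - exists 1. split; [lra|]. intros x. change (gauss_deriv 0 x) with (gauss x).
    rewrite pow_O, Rabs_pos_eq by (apply Rlt_le, exp_pos). lra.
  - exists 2. split; [lra|]. intros x. rewrite gauss_deriv_1, pow_1, !Rabs_mult.
    rewrite (Rabs_pos_eq (gauss x)) by (apply Rlt_le, exp_pos).
    rewrite Rabs_left by lra.
    pose proof (exp_pos (- x ^ 2)). pose proof (Rabs_pos x). unfold gauss. nra.
Qed.

(** * The Gaussian integral *)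

Lemma continuous_gauss x : continuous gauss x.
Proof. apply continuous_of_ex_derive. unfold gauss. auto_derive; auto. Qed.

Lemma ex_RInt_gauss a b : ex_RInt gauss a b.
Proof. apply (ex_RInt_continuous (V := R_CompleteNormedModule)). intros; apply continuous_gauss. Qed.

Definition gauss_primitive (T : R) : R := RInt gauss 0 T.

(* Substituting [x = T y] in [gauss_primitive] shows that
   [gauss_primitive T ^ 2 + gauss_tail T] does not depend on [T]. *)
Definition gauss_tail_integrand (T y : R) : R := exp (- T ^ 2 * (1 + y ^ 2)) / (1 + y ^ 2).

Definition gauss_tail (T : R) : R := RInt (gauss_tail_integrand T) 0 1.

Lemma is_derive_gauss_primitive T : is_derive gauss_primitive T (gauss T).
Proof.
  apply (is_derive_RInt gauss gauss_primitive 0 T).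
  - apply filter_forall. intros x. apply (RInt_correct (V := R_CompleteNormedModule)), ex_RInt_gauss.
  - apply continuous_gauss.
Qed.

Lemma one_plus_sqr_pos y : 0 < 1 + y ^ 2.
Proof. pose proof (pow2_ge_0 y). lra. Qed.

Lemma is_derive_gauss_tail_integrand T y :
  is_derive (fun u => gauss_tail_integrand u y) T (-2 * T * exp (- T ^ 2 * (1 + y ^ 2))).
Proof.
  unfold gauss_tail_integrand. pose proof (one_plus_sqr_pos y). auto_derive; [lra|].
  replace (- (T * (T * 1)) * (1 + y * (y * 1))) with (- T ^ 2 * (1 + y ^ 2)) by ring.
  field. lra.
Qed.

Lemma ex_RInt_gauss_tail_integrand T a b : ex_RInt (gauss_tail_integrand T) a b.
Proof.
  apply (ex_RInt_continuous (V := R_CompleteNormedModule)). intros y _.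
  apply continuous_of_ex_derive. unfold gauss_tail_integrand.
  pose proof (one_plus_sqr_pos y). auto_derive. lra.
Qed.

Lemma gauss_tail_integrand_scaled T y :
  -2 * T * exp (- T ^ 2 * (1 + y ^ 2)) = scal (-2 * gauss T) (scal T (gauss (T * y + 0))).
Proof.
  change (scal T ?b) with (T * b). change (scal ?a ?b) with (a * b). unfold gauss.
  replace (exp (- T ^ 2 * (1 + y ^ 2))) with (exp (- T ^ 2) * exp (- (T * y + 0) ^ 2))
    by (rewrite <- exp_plus; f_equal; ring).
  ring.
Qed.

Lemma is_derive_gauss_tail T : is_derive gauss_tail T (-2 * gauss T * gauss_primitive T).
Proof.
  unfold gauss_tail.
  replace (-2 * gauss T * gauss_primitive T)
    with (RInt (fun y => Derive (fun u => gauss_tail_integrand u y) T) 0 1).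
  - apply (is_derive_RInt_param gauss_tail_integrand 0 1 T).
    + apply filter_forall. intros x t _. eexists. apply is_derive_gauss_tail_integrand.
    + intros t _. eapply continuity_2d_pt_ext.
      { intros x y. symmetry. apply is_derive_unique, is_derive_gauss_tail_integrand. }
      continuity_2d.
    + apply filter_forall. intros x. apply ex_RInt_gauss_tail_integrand.
  - rewrite (RInt_ext _ (fun y => scal (-2 * gauss T) (scal T (gauss (T * y + 0))))).
    2:{ intros y _. etransitivity; [apply is_derive_unique, is_derive_gauss_tail_integrand|].
        apply gauss_tail_integrand_scaled. }
    rewrite (RInt_scal (V := R_CompleteNormedModule)).
    2:{ apply (ex_RInt_ext (fun y => scal T (gauss (T * y + 0)))); [reflexivity|].
        apply (ex_RInt_comp_lin (V := R_CompleteNormedModule)), ex_RInt_gauss. }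
    rewrite (RInt_comp_lin (V := R_CompleteNormedModule)) by apply ex_RInt_gauss.
    rewrite Rmult_0_r, Rplus_0_r, Rmult_1_r, Rplus_0_r. reflexivity.
Qed.

Lemma gauss_tail_0 : gauss_tail 0 = PI / 4.
Proof.
  rewrite <- atan_1. replace (atan 1) with (atan 1 - atan 0) by (rewrite atan_0; ring).
  apply (is_RInt_unique (V := R_CompleteNormedModule)).
  apply (is_RInt_derive (V := R_CompleteNormedModule) atan).
  - intros y _. apply is_derive_Reals. replace (gauss_tail_integrand 0 y) with (/ (1 + y ^ 2)).
    + apply derivable_pt_lim_atan.
    + unfold gauss_tail_integrand. replace (- 0 ^ 2 * (1 + y ^ 2)) with 0 by ring.
      rewrite exp_0. unfold Rdiv. ring.
  - intros y _. apply continuous_of_ex_derive. unfold gauss_tail_integrand.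
    pose proof (one_plus_sqr_pos y). auto_derive. lra.
Qed.

Lemma gauss_primitive_sqr_plus_tail T : gauss_primitive T ^ 2 + gauss_tail T = PI / 4.
Proof.
  assert (Hd : forall x, is_derive (fun T => gauss_primitive T ^ 2 + gauss_tail T) x 0).
  { intros x.
    replace 0 with (plus (INR 2 * gauss x * gauss_primitive x ^ 1) (-2 * gauss x * gauss_primitive x))
      by (change plus with Rplus; simpl; ring).
    apply (is_derive_plus (K := R_AbsRing) (V := R_NormedModule) (fun T => gauss_primitive T ^ 2)).
    - apply (is_derive_pow gauss_primitive 2 x (gauss x)), is_derive_gauss_primitive.
    - apply is_derive_gauss_tail. }
  destruct (MVT_gen (fun T => gauss_primitive T ^ 2 + gauss_tail T) 0 T (fun _ => 0)) as [c [_ Hc]].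
  - intros; apply Hd.
  - intros x _. apply continuity_pt_filterlim.
    apply (continuous_of_ex_derive (fun T => gauss_primitive T ^ 2 + gauss_tail T)).
    eexists; apply Hd.
  - unfold gauss_primitive at 2 in Hc. rewrite (RInt_point (V := R_CompleteNormedModule)) in Hc.
    rewrite gauss_tail_0 in Hc. change zero with 0 in Hc. rewrite pow_i in Hc by lia. lra.
Qed.

Lemma gauss_tail_bounds T : 0 <= gauss_tail T <= gauss T.
Proof.
  pose proof (ex_RInt_gauss_tail_integrand T 0 1) as Hex.
  split.
  - apply RInt_ge_0; [lra | exact Hex|]. intros y _. unfold gauss_tail_integrand.
    apply Rlt_le, Rdiv_lt_0_compat; [apply exp_pos | apply one_plus_sqr_pos].
  - replace (gauss T) with (RInt (fun _ => gauss T) 0 1).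
    2:{ rewrite (RInt_const (V := R_CompleteNormedModule)).
        change (@eq R ((1 - 0) * gauss T) (gauss T)). ring. }
    apply RInt_le; [lra | exact Hex | apply ex_RInt_const|].
    intros y Hy. unfold gauss_tail_integrand, gauss. pose proof (one_plus_sqr_pos y).
    assert (exp (- T ^ 2 * (1 + y ^ 2)) <= exp (- T ^ 2)).
    { apply exp_le. pose proof (pow2_ge_0 T). pose proof (pow2_ge_0 y). nra. }
    apply Rmult_le_reg_r with (1 + y ^ 2); [lra|].
    unfold Rdiv. rewrite Rmult_assoc, Rinv_l by lra.
    pose proof (pow2_ge_0 y). pose proof (exp_pos (- T ^ 2)). nra.
Qed.

Lemma gauss_primitive_near_limit T :
  0 <= T -> Rabs (gauss_primitive T - sqrt PI / 2) <= 2 / sqrt PI * gauss T.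
Proof.
  intros HT. pose proof (gauss_primitive_sqr_plus_tail T). pose proof (gauss_tail_bounds T).
  assert (0 <= gauss_primitive T).
  { apply RInt_ge_0; auto. apply ex_RInt_gauss. intros; apply Rlt_le, exp_pos. }
  pose proof PI_RGT_0. assert (Hs : 0 < sqrt PI) by (apply sqrt_lt_R0; lra).
  pose proof (sqrt_sqrt PI ltac:(lra)) as Hss.
  set (s := sqrt PI) in *. set (S := gauss_primitive T) in *. set (B := gauss_tail T) in *.
  assert (Hq : S - s / 2 = - B / (S + s / 2)).
  { field_simplify_eq; [|lra]. rewrite <- Hss in *. nra. }
  rewrite Hq. unfold Rdiv. rewrite Rabs_mult, Rabs_Ropp, Rabs_inv.
  rewrite (Rabs_pos_eq B), (Rabs_pos_eq (S + s * / 2)) by lra.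
  apply Rle_trans with (B * / (s / 2)).
  - apply Rmult_le_compat_l; [lra|]. apply Rinv_le_contravar; lra.
  - replace (2 * / s * gauss T) with (gauss T * / (s / 2)) by (field; lra).
    apply Rmult_le_compat_r; [apply Rlt_le, Rinv_0_lt_compat|]; lra.
Qed.

Lemma gauss_primitive_opp T : gauss_primitive (- T) = - gauss_primitive T.
Proof.
  unfold gauss_primitive.
  pose proof (RInt_comp_lin (V := R_CompleteNormedModule) gauss (-1) 0 0 T (ex_RInt_gauss _ _)) as H.
  rewrite Rmult_0_r, Rplus_0_r, Rplus_0_r in H.
  replace (-1 * T) with (- T) in H by ring. rewrite <- H.
  rewrite (RInt_ext _ (fun y => scal (-1) (gauss y))).
  2:{ intros x _. unfold gauss. do 3 f_equal. ring. }
  rewrite (RInt_scal (V := R_CompleteNormedModule)) by apply ex_RInt_gauss.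
  change (scal ?a ?b) with (a * b). ring.
Qed.

Lemma gauss_vanishes : filterlim gauss at_infinity (locally 0).
Proof.
  eapply filterlim_ext; [|apply (poly_gauss_decay 0 0 (Rle_refl 0))].
  intros x. unfold gauss. rewrite pow_O, Rmult_1_l, Rmult_0_l, Rminus_0_l. reflexivity.
Qed.

Lemma filterlim_gauss_primitive :
  filterlim gauss_primitive (Rbar_locally p_infty) (locally (sqrt PI / 2)).
Proof.
  apply (filterlim_of_norm_le (V := R_NormedModule) _ (fun T => 2 / sqrt PI * gauss T)).
  - exists 0. intros T HT. apply gauss_primitive_near_limit. lra.
  - apply filterlim_mult_0, (filterlim_filter_le_1 _ at_infinity_le_p_infty), gauss_vanishes.
Qed.

Lemma filterlim_RInt_gauss :
  filterlim (fun uv => RInt gauss (fst uv) (snd uv))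
    (filter_prod (Rbar_locally m_infty) (Rbar_locally p_infty)) (locally (sqrt PI)).
Proof.
  apply (filterlim_ext (fun uv => plus (gauss_primitive (- fst uv)) (gauss_primitive (snd uv)))).
  { intros [u v]. cbn [fst snd]. rewrite gauss_primitive_opp. unfold gauss_primitive.
    rewrite <- (RInt_Chasles gauss u 0 v) by apply ex_RInt_gauss.
    rewrite <- (opp_RInt_swap gauss) by apply ex_RInt_gauss.
    change (opp ?a) with (- a). rewrite Ropp_involutive. reflexivity. }
  replace (sqrt PI) with (sqrt PI / 2 + sqrt PI / 2) by field.
  apply (filterlim_prod_plus (V := R_NormedModule) (fun u => gauss_primitive (- u)) gauss_primitive).
  - exact (filterlim_comp _ _ _ Ropp gauss_primitive _ _ _ (filterlim_Rbar_opp m_infty)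
             filterlim_gauss_primitive).
  - exact filterlim_gauss_primitive.
Qed.

(** * Gaussian integral of a complex exponential *)

Section ComplexGaussian.

(* [b = be + i ga]; [cgauss_re t x + i cgauss_im t x = e^{t b x - x^2}]. *)
Variables be ga : R.

Definition cgauss_re (t x : R) : R := exp (t * be * x - x ^ 2) * cos (t * ga * x).
Definition cgauss_im (t x : R) : R := exp (t * be * x - x ^ 2) * sin (t * ga * x).

Lemma ex_RInt_cgauss_re t a b : ex_RInt (cgauss_re t) a b.
Proof.
  apply (ex_RInt_continuous (V := R_CompleteNormedModule)). intros.
  apply continuous_of_ex_derive. unfold cgauss_re. auto_derive; auto.
Qed.

Lemma ex_RInt_cgauss_im t a b : ex_RInt (cgauss_im t) a b.
Proof.
  apply (ex_RInt_continuous (V := R_CompleteNormedModule)). intros.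
  apply continuous_of_ex_derive. unfold cgauss_im. auto_derive; auto.
Qed.

Lemma is_derive_cgauss_re_t t x :
  is_derive (fun s => cgauss_re s x) t (x * (be * cgauss_re t x - ga * cgauss_im t x)).
Proof. unfold cgauss_re, cgauss_im. auto_derive_eq. Qed.

Lemma is_derive_cgauss_im_t t x :
  is_derive (fun s => cgauss_im s x) t (x * (be * cgauss_im t x + ga * cgauss_re t x)).
Proof. unfold cgauss_re, cgauss_im. auto_derive_eq. Qed.

Lemma is_derive_cgauss_re_x t x :
  is_derive (cgauss_re t) x (t * be * cgauss_re t x - 2 * (x * cgauss_re t x) - t * ga * cgauss_im t x).
Proof. unfold cgauss_re, cgauss_im. auto_derive_eq. Qed.

Lemma is_derive_cgauss_im_x t x :
  is_derive (cgauss_im t) x (t * be * cgauss_im t x - 2 * (x * cgauss_im t x) + t * ga * cgauss_re t x).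
Proof. unfold cgauss_re, cgauss_im. auto_derive_eq. Qed.

Variables u v : R.

Definition cgauss_re_int (t : R) : R := RInt (cgauss_re t) u v.
Definition cgauss_im_int (t : R) : R := RInt (cgauss_im t) u v.

Lemma is_derive_cgauss_re_int t :
  is_derive cgauss_re_int t (RInt (fun x => x * (be * cgauss_re t x - ga * cgauss_im t x)) u v).
Proof.
  replace (RInt _ u v) with (RInt (fun x => Derive (fun s => cgauss_re s x) t) u v)
    by (apply RInt_ext; intros; apply is_derive_unique, is_derive_cgauss_re_t).
  apply (is_derive_RInt_param cgauss_re u v t).
  - apply filter_forall. intros s x _. eexists. apply is_derive_cgauss_re_t.
  - intros x _. eapply continuity_2d_pt_ext.
    { intros s y. symmetry. apply is_derive_unique, is_derive_cgauss_re_t. }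
    unfold cgauss_re, cgauss_im. continuity_2d.
  - apply filter_forall. intros s. apply ex_RInt_cgauss_re.
Qed.

Lemma is_RInt_x_cgauss_re t :
  is_RInt (fun x => x * cgauss_re t x) u v
    ((t * be * cgauss_re_int t - t * ga * cgauss_im_int t - (cgauss_re t v - cgauss_re t u)) / 2).
Proof.
  pose proof (is_RInt_derive (V := R_CompleteNormedModule) (cgauss_re t) _ u v
    (fun x _ => is_derive_cgauss_re_x t x)) as Hftc.
  assert (Hre := RInt_correct _ _ _ (ex_RInt_cgauss_re t u v)).
  assert (Him := RInt_correct _ _ _ (ex_RInt_cgauss_im t u v)).
  apply (is_RInt_ext (fun x => / 2 * ((t * be * cgauss_re t x - t * ga * cgauss_im t x)
    - (t * be * cgauss_re t x - 2 * (x * cgauss_re t x) - t * ga * cgauss_im t x)))).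
  { intros x _. retype_eq R. field. }
  replace ((t * be * cgauss_re_int t - t * ga * cgauss_im_int t - (cgauss_re t v - cgauss_re t u)) / 2)
    with (/ 2 * ((t * be * cgauss_re_int t - t * ga * cgauss_im_int t) - (cgauss_re t v - cgauss_re t u)))
    by field.
  assert (Hcont : forall x, Rmin u v <= x <= Rmax u v -> continuous
    (fun x => t * be * cgauss_re t x - 2 * (x * cgauss_re t x) - t * ga * cgauss_im t x) x).
  { intros x _. apply continuous_of_ex_derive. unfold cgauss_re, cgauss_im. auto_derive; auto. }
  exact (is_RInt_scal (V := R_NormedModule) _ _ _ _ _
          (is_RInt_minus (V := R_NormedModule) _ _ _ _ _ _
            (is_RInt_minus (V := R_NormedModule) _ _ _ _ _ _
              (is_RInt_scal (V := R_NormedModule) _ _ _ (t * be) _ Hre)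
              (is_RInt_scal (V := R_NormedModule) _ _ _ (t * ga) _ Him))
            (Hftc Hcont))).
Qed.

Lemma is_RInt_x_cgauss_im t :
  is_RInt (fun x => x * cgauss_im t x) u v
    ((t * be * cgauss_im_int t + t * ga * cgauss_re_int t - (cgauss_im t v - cgauss_im t u)) / 2).
Proof.
  pose proof (is_RInt_derive (V := R_CompleteNormedModule) (cgauss_im t) _ u v
    (fun x _ => is_derive_cgauss_im_x t x)) as Hftc.
  assert (Hre := RInt_correct _ _ _ (ex_RInt_cgauss_re t u v)).
  assert (Him := RInt_correct _ _ _ (ex_RInt_cgauss_im t u v)).
  apply (is_RInt_ext (fun x => / 2 * ((t * be * cgauss_im t x + t * ga * cgauss_re t x)
    - (t * be * cgauss_im t x - 2 * (x * cgauss_im t x) + t * ga * cgauss_re t x)))).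
  { intros x _. retype_eq R. field. }
  replace ((t * be * cgauss_im_int t + t * ga * cgauss_re_int t - (cgauss_im t v - cgauss_im t u)) / 2)
    with (/ 2 * ((t * be * cgauss_im_int t + t * ga * cgauss_re_int t) - (cgauss_im t v - cgauss_im t u)))
    by field.
  assert (Hcont : forall x, Rmin u v <= x <= Rmax u v -> continuous
    (fun x => t * be * cgauss_im t x - 2 * (x * cgauss_im t x) + t * ga * cgauss_re t x) x).
  { intros x _. apply continuous_of_ex_derive. unfold cgauss_re, cgauss_im. auto_derive; auto. }
  exact (is_RInt_scal (V := R_NormedModule) _ _ _ _ _
          (is_RInt_minus (V := R_NormedModule) _ _ _ _ _ _
            (is_RInt_plus (V := R_NormedModule) _ _ _ _ _ _
              (is_RInt_scal (V := R_NormedModule) _ _ _ (t * be) _ Him)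
              (is_RInt_scal (V := R_NormedModule) _ _ _ (t * ga) _ Hre))
            (Hftc Hcont))).
Qed.

Lemma is_derive_cgauss_im_int t :
  is_derive cgauss_im_int t (RInt (fun x => x * (be * cgauss_im t x + ga * cgauss_re t x)) u v).
Proof.
  replace (RInt _ u v) with (RInt (fun x => Derive (fun s => cgauss_im s x) t) u v)
    by (apply RInt_ext; intros; apply is_derive_unique, is_derive_cgauss_im_t).
  apply (is_derive_RInt_param cgauss_im u v t).
  - apply filter_forall. intros s x _. eexists. apply is_derive_cgauss_im_t.
  - intros x _. eapply continuity_2d_pt_ext.
    { intros s y. symmetry. apply is_derive_unique, is_derive_cgauss_im_t. }
    unfold cgauss_re, cgauss_im. continuity_2d.
  - apply filter_forall. intros s. apply ex_RInt_cgauss_im.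
Qed.

Definition cgauss_forcing_re (t : R) : R :=
  (- be * (cgauss_re t v - cgauss_re t u) + ga * (cgauss_im t v - cgauss_im t u)) / 2.
Definition cgauss_forcing_im (t : R) : R :=
  (- be * (cgauss_im t v - cgauss_im t u) - ga * (cgauss_re t v - cgauss_re t u)) / 2.

Lemma is_derive_cgauss_re_int_ode t :
  is_derive cgauss_re_int t
    (t / 2 * ((be ^ 2 - ga ^ 2) * cgauss_re_int t - 2 * be * ga * cgauss_im_int t)
     + cgauss_forcing_re t).
Proof.
  replace (_ + cgauss_forcing_re t)
    with (RInt (fun x => x * (be * cgauss_re t x - ga * cgauss_im t x)) u v);
    [apply is_derive_cgauss_re_int|].
  apply (is_RInt_unique (V := R_CompleteNormedModule)).
  apply (is_RInt_ext (fun x => be * (x * cgauss_re t x) - ga * (x * cgauss_im t x))).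
  { intros x _. retype_eq R. ring. }
  match goal with |- is_RInt _ _ _ ?l => replace l with
    (be * ((t * be * cgauss_re_int t - t * ga * cgauss_im_int t - (cgauss_re t v - cgauss_re t u)) / 2)
     - ga * ((t * be * cgauss_im_int t + t * ga * cgauss_re_int t - (cgauss_im t v - cgauss_im t u)) / 2))
    by (unfold cgauss_forcing_re; field) end.
  exact (is_RInt_minus (V := R_NormedModule) _ _ _ _ _ _
          (is_RInt_scal (V := R_NormedModule) _ _ _ be _ (is_RInt_x_cgauss_re t))
          (is_RInt_scal (V := R_NormedModule) _ _ _ ga _ (is_RInt_x_cgauss_im t))).
Qed.

Lemma is_derive_cgauss_im_int_ode t :
  is_derive cgauss_im_int t
    (t / 2 * ((be ^ 2 - ga ^ 2) * cgauss_im_int t + 2 * be * ga * cgauss_re_int t)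
     + cgauss_forcing_im t).
Proof.
  replace (_ + cgauss_forcing_im t)
    with (RInt (fun x => x * (be * cgauss_im t x + ga * cgauss_re t x)) u v);
    [apply is_derive_cgauss_im_int|].
  apply (is_RInt_unique (V := R_CompleteNormedModule)).
  apply (is_RInt_ext (fun x => be * (x * cgauss_im t x) + ga * (x * cgauss_re t x))).
  { intros x _. retype_eq R. ring. }
  match goal with |- is_RInt _ _ _ ?l => replace l with
    (be * ((t * be * cgauss_im_int t + t * ga * cgauss_re_int t - (cgauss_im t v - cgauss_im t u)) / 2)
     + ga * ((t * be * cgauss_re_int t - t * ga * cgauss_im_int t - (cgauss_re t v - cgauss_re t u)) / 2))
    by (unfold cgauss_forcing_im; field) end.
  exact (is_RInt_plus (V := R_NormedModule) _ _ _ _ _ _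
          (is_RInt_scal (V := R_NormedModule) _ _ _ be _ (is_RInt_x_cgauss_im t))
          (is_RInt_scal (V := R_NormedModule) _ _ _ ga _ (is_RInt_x_cgauss_re t))).
Qed.

Definition weight_re (t : R) : R :=
  exp (- t ^ 2 * (be ^ 2 - ga ^ 2) / 4) * cos (t ^ 2 * (2 * be * ga) / 4).
Definition weight_im (t : R) : R :=
  - (exp (- t ^ 2 * (be ^ 2 - ga ^ 2) / 4) * sin (t ^ 2 * (2 * be * ga) / 4)).

(* [(weight_re, weight_im) = exp (- t^2 b^2 / 4)] integrates the linear part of the ODE, so
   that the derivative of [(damped_re, damped_im)] only involves the values at [u] and [v]. *)
Definition damped_re (t : R) : R := weight_re t * cgauss_re_int t - weight_im t * cgauss_im_int t.
Definition damped_im (t : R) : R := weight_re t * cgauss_im_int t + weight_im t * cgauss_re_int t.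

Lemma is_derive_weight_re t :
  is_derive weight_re t (- (t / 2) * ((be ^ 2 - ga ^ 2) * weight_re t - 2 * be * ga * weight_im t)).
Proof. unfold weight_re, weight_im. auto_derive_eq. Qed.

Lemma is_derive_weight_im t :
  is_derive weight_im t (- (t / 2) * ((be ^ 2 - ga ^ 2) * weight_im t + 2 * be * ga * weight_re t)).
Proof. unfold weight_re, weight_im. auto_derive_eq. Qed.

Lemma is_derive_damped_re t :
  is_derive damped_re t (weight_re t * cgauss_forcing_re t - weight_im t * cgauss_forcing_im t).
Proof.
  unfold damped_re. eapply is_derive_eq.
  - apply (is_derive_minus (K := R_AbsRing) (V := R_NormedModule));
      apply Derive.is_derive_mult;
      [apply is_derive_weight_re | apply is_derive_cgauss_re_int_ode
      | apply is_derive_weight_im | apply is_derive_cgauss_im_int_ode].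
  - change (minus ?a ?b) with (a - b). retype_eq R. field.
Qed.

Lemma is_derive_damped_im t :
  is_derive damped_im t (weight_re t * cgauss_forcing_im t + weight_im t * cgauss_forcing_re t).
Proof.
  unfold damped_im. eapply is_derive_eq.
  - apply (is_derive_plus (K := R_AbsRing) (V := R_NormedModule));
      apply Derive.is_derive_mult;
      [apply is_derive_weight_re | apply is_derive_cgauss_im_int_ode
      | apply is_derive_weight_im | apply is_derive_cgauss_re_int_ode].
  - change (plus ?a ?b) with (a + b). retype_eq R. field.
Qed.

Lemma damped_at_0 : damped_re 0 = RInt gauss u v /\ damped_im 0 = 0.
Proof.
  assert (Hw : weight_re 0 = 1 /\ weight_im 0 = 0).
  { unfold weight_re, weight_im.
    replace (- 0 ^ 2 * (be ^ 2 - ga ^ 2) / 4) with 0 by field.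
    replace (0 ^ 2 * (2 * be * ga) / 4) with 0 by field.
    rewrite exp_0, cos_0, sin_0. split; ring. }
  assert (HP : cgauss_re_int 0 = RInt gauss u v).
  { apply RInt_ext. intros x _. unfold cgauss_re, gauss.
    replace (0 * be * x - x ^ 2) with (- x ^ 2) by ring.
    replace (0 * ga * x) with 0 by ring. rewrite cos_0. retype_eq R. ring. }
  assert (HQ : cgauss_im_int 0 = 0).
  { unfold cgauss_im_int. rewrite (RInt_ext _ (fun _ => 0)).
    - rewrite (RInt_const (V := R_CompleteNormedModule)). change (scal ?a ?b) with (a * b).
      retype_eq R. ring.
    - intros x _. unfold cgauss_im. replace (0 * ga * x) with 0 by ring. rewrite sin_0.
      retype_eq R. ring. }
  unfold damped_re, damped_im. destruct Hw as [-> ->]. rewrite HP, HQ. split; ring.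
Qed.

Definition cgauss_envelope (x : R) : R := exp (Rabs be * Rabs x - x ^ 2).

Lemma exp_tilt_le_envelope t x : 0 <= t <= 1 -> exp (t * be * x - x ^ 2) <= cgauss_envelope x.
Proof.
  intros Ht. apply exp_le. apply Rplus_le_compat_r.
  eapply Rle_trans; [apply Rle_abs|]. rewrite !Rabs_mult, (Rabs_pos_eq t) by lra.
  pose proof (Rabs_pos be). pose proof (Rabs_pos x).
  assert (0 <= Rabs be * Rabs x) by nra. nra.
Qed.

Lemma Rabs_cgauss_le t x : 0 <= t <= 1 ->
  Rabs (cgauss_re t x) <= cgauss_envelope x /\ Rabs (cgauss_im t x) <= cgauss_envelope x.
Proof.
  intros Ht. pose proof (exp_tilt_le_envelope t x Ht).
  pose proof (exp_pos (t * be * x - x ^ 2)).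
  assert (Rabs (cos (t * ga * x)) <= 1) by (apply Rabs_le, COS_bound).
  assert (Rabs (sin (t * ga * x)) <= 1) by (apply Rabs_le, SIN_bound).
  unfold cgauss_re, cgauss_im. rewrite !Rabs_mult, Rabs_pos_eq by lra.
  pose proof (Rabs_pos (cos (t * ga * x))). pose proof (Rabs_pos (sin (t * ga * x))).
  split; nra.
Qed.

Lemma Rabs_cgauss_forcing_le t : 0 <= t <= 1 ->
  Rabs (cgauss_forcing_re t) <= (Rabs be + Rabs ga) * (cgauss_envelope u + cgauss_envelope v) /\
  Rabs (cgauss_forcing_im t) <= (Rabs be + Rabs ga) * (cgauss_envelope u + cgauss_envelope v).
Proof.
  intros Ht. destruct (Rabs_cgauss_le t u Ht), (Rabs_cgauss_le t v Ht).
  assert (Hdiff : forall a b, Rabs a <= cgauss_envelope v -> Rabs b <= cgauss_envelope u ->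
                    Rabs (a - b) <= cgauss_envelope u + cgauss_envelope v).
  { intros a b Ha Hb. unfold Rminus. eapply Rle_trans; [apply Rabs_triang|].
    rewrite Rabs_Ropp. lra. }
  unfold cgauss_forcing_re, cgauss_forcing_im. rewrite <- (Rabs_Ropp be). split.
  - apply Rabs_half_lin_comb_le; apply Hdiff; assumption.
  - rewrite <- (Rabs_Ropp ga).
    replace (- be * (cgauss_im t v - cgauss_im t u) - ga * (cgauss_re t v - cgauss_re t u))
      with (- be * (cgauss_im t v - cgauss_im t u) + - ga * (cgauss_re t v - cgauss_re t u)) by ring.
    apply Rabs_half_lin_comb_le; apply Hdiff; assumption.
Qed.

Lemma Rabs_weight_le t : 0 <= t <= 1 ->
  Rabs (weight_re t) <= exp (Rabs (be ^ 2 - ga ^ 2) / 4) /\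
  Rabs (weight_im t) <= exp (Rabs (be ^ 2 - ga ^ 2) / 4).
Proof.
  intros Ht.
  assert (HE : exp (- t ^ 2 * (be ^ 2 - ga ^ 2) / 4) <= exp (Rabs (be ^ 2 - ga ^ 2) / 4)).
  { apply exp_le. pose proof (Rle_abs (- (be ^ 2 - ga ^ 2))) as Hr. rewrite Rabs_Ropp in Hr.
    assert (0 <= t ^ 2 <= 1) by (split; [apply pow2_ge_0 | simpl; nra]).
    pose proof (Rabs_pos (be ^ 2 - ga ^ 2)). nra. }
  set (c := t ^ 2 * (2 * be * ga) / 4).
  assert (Rabs (cos c) <= 1) by (apply Rabs_le, COS_bound).
  assert (Rabs (sin c) <= 1) by (apply Rabs_le, SIN_bound).
  pose proof (Rabs_pos (cos c)). pose proof (Rabs_pos (sin c)).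
  pose proof (exp_pos (- t ^ 2 * (be ^ 2 - ga ^ 2) / 4)).
  unfold weight_re, weight_im. fold c. rewrite Rabs_Ropp, !Rabs_mult, Rabs_pos_eq by lra.
  split; nra.
Qed.

Lemma Rabs_damped_increment_le :
  Rabs (damped_re 1 - damped_re 0) <=
    2 * exp (Rabs (be ^ 2 - ga ^ 2) / 4) * ((Rabs be + Rabs ga) * (cgauss_envelope u + cgauss_envelope v)) /\
  Rabs (damped_im 1 - damped_im 0) <=
    2 * exp (Rabs (be ^ 2 - ga ^ 2) / 4) * ((Rabs be + Rabs ga) * (cgauss_envelope u + cgauss_envelope v)).
Proof.
  split; [apply (Rabs_increment_le _ _ _ is_derive_damped_re)
         | apply (Rabs_increment_le _ _ _ is_derive_damped_im)];
    intros t Ht; destruct (Rabs_weight_le t Ht), (Rabs_cgauss_forcing_le t Ht).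
  - unfold Rminus. rewrite Ropp_mult_distr_l.
    apply Rabs_mul_plus_mul_le; rewrite ?Rabs_Ropp; assumption.
  - apply Rabs_mul_plus_mul_le; assumption.
Qed.

End ComplexGaussian.

Lemma cexp_mul_gauss_components (b : C) x :
  (cexp (b * RtoC x) * RtoC (gauss x))%C = (cgauss_re (Re b) (Im b) 1 x, cgauss_im (Re b) (Im b) 1 x).
Proof.
  destruct b as [be ga]. unfold cexp, cgauss_re, cgauss_im, gauss, RtoC, Re, Im. cbn [fst snd].
  replace (exp (1 * be * x - x ^ 2)) with (exp (be * x - ga * 0) * exp (- x ^ 2))
    by (rewrite <- exp_plus; f_equal; ring).
  replace (1 * ga * x) with (be * 0 + ga * x) by ring.
  apply injective_projections; simpl; ring.
Qed.

Definition cgauss_int (be ga u v : R) : C := (cgauss_re_int be ga u v 1, cgauss_im_int be ga u v 1).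

Definition damped_increment (be ga u v : R) : C :=
  ((damped_re be ga u v 1 - damped_re be ga u v 0)%R, (damped_im be ga u v 1 - damped_im be ga u v 0)%R).

Lemma cgauss_int_eq (b : C) u v :
  cgauss_int (Re b) (Im b) u v =
  (cexp (b * b / RtoC 4) * (RtoC (RInt gauss u v) + damped_increment (Re b) (Im b) u v))%C.
Proof.
  set (be := Re b). set (ga := Im b).
  assert (Hw : cexp (- (b * b) / RtoC 4)%C = (weight_re be ga 1, weight_im be ga 1)).
  { unfold cexp, weight_re, weight_im.
    replace (Re (- (b * b) / RtoC 4)%C) with (- 1 ^ 2 * (be ^ 2 - ga ^ 2) / 4)
      by (unfold be, ga; destruct b; simpl; field).
    replace (Im (- (b * b) / RtoC 4)%C) with (- (1 ^ 2 * (2 * be * ga) / 4))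
      by (unfold be, ga; destruct b; simpl; field).
    rewrite cos_neg, sin_neg. f_equal. ring. }
  assert (Hinv : (cexp (b * b / RtoC 4) * cexp (- (b * b) / RtoC 4))%C = RtoC 1).
  { rewrite <- cexp_plus, <- exp_0, <- cexp_RtoC. f_equal.
    assert (RtoC 4 <> RtoC 0) by (intro H; apply RtoC_inj in H; lra). field; auto. }
  assert (Hdamped : (RtoC (RInt gauss u v) + damped_increment be ga u v)%C =
                    (cexp (- (b * b) / RtoC 4) * cgauss_int be ga u v)%C).
  { destruct (damped_at_0 be ga u v) as [H0 H1].
    rewrite Hw. unfold damped_increment, cgauss_int. rewrite H0, H1.
    unfold damped_re, damped_im. apply injective_projections; simpl; ring. }
  rewrite Hdamped, Cmult_assoc, Hinv, Cmult_1_l. reflexivity.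
Qed.

Lemma cgauss_envelope_vanishes be : filterlim (cgauss_envelope be) at_infinity (locally 0).
Proof.
  eapply filterlim_ext; [|exact (poly_gauss_decay 0 (Rabs be) (Rabs_pos be))].
  intros x. cbv beta. rewrite pow_O, Rmult_1_l. reflexivity.
Qed.

Lemma filterlim_damped_increment be ga :
  filterlim (fun uv => damped_increment be ga (fst uv) (snd uv))
    (filter_prod (Rbar_locally m_infty) (Rbar_locally p_infty)) (locally (RtoC 0)).
Proof.
  set (K := 2 * (2 * exp (Rabs (be ^ 2 - ga ^ 2) / 4) * (Rabs be + Rabs ga))).
  apply (filterlim_of_norm_le (V := C_R_NormedModule) _
    (fun uv => K * (cgauss_envelope be (fst uv) + cgauss_envelope be (snd uv))) (RtoC 0)).
  - apply filter_forall. intros [u v]. cbn [fst snd].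
    rewrite norm_C_R_minus_0.
    eapply Rle_trans; [apply Cmod_le_Rabs_Re_Im|]. simpl.
    destruct (Rabs_damped_increment_le be ga u v). unfold K. lra.
  - apply filterlim_mult_0.
    pose proof (cgauss_envelope_vanishes be) as Henv.
    pose proof (filterlim_prod_plus (V := R_NormedModule) (cgauss_envelope be) (cgauss_envelope be) 0 0
      (filterlim_filter_le_1 _ at_infinity_le_m_infty Henv)
      (filterlim_filter_le_1 _ at_infinity_le_p_infty Henv)) as H.
    change (plus 0 0) with (0 + 0) in H. rewrite Rplus_0_r in H. exact H.
Qed.

Lemma is_RInt_cexp_gauss (b : C) u v :
  @is_RInt C_R_NormedModule (fun x => cexp (b * RtoC x) * RtoC (gauss x))%C u v
    (cgauss_int (Re b) (Im b) u v).
Proof.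
  apply is_RInt_C_pair.
  - apply (is_RInt_ext (cgauss_re (Re b) (Im b) 1)).
    { intros. rewrite cexp_mul_gauss_components. reflexivity. }
    apply (RInt_correct (V := R_CompleteNormedModule)), ex_RInt_cgauss_re.
  - apply (is_RInt_ext (cgauss_im (Re b) (Im b) 1)).
    { intros. rewrite cexp_mul_gauss_components. reflexivity. }
    apply (RInt_correct (V := R_CompleteNormedModule)), ex_RInt_cgauss_im.
Qed.

Lemma filterlim_cgauss_int (b : C) :
  filterlim (fun uv => cgauss_int (Re b) (Im b) (fst uv) (snd uv))
    (filter_prod (Rbar_locally m_infty) (Rbar_locally p_infty))
    (locally (RtoC (sqrt PI) * cexp (b * b / RtoC 4))%C).
Proof.
  set (E := cexp (b * b / RtoC 4)).
  apply (filterlim_ext (fun uv => E * plus (RtoC (RInt gauss (fst uv) (snd uv)))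
                                          (damped_increment (Re b) (Im b) (fst uv) (snd uv)))%C).
  { intros [u v]. symmetry. apply cgauss_int_eq. }
  replace (RtoC (sqrt PI) * E)%C with (E * (RtoC (sqrt PI) + RtoC 0))%C
    by (rewrite Cplus_0_r; apply Cmult_comm).
  apply (filterlim_comp _ _ _ _ (fun y => E * y)%C _ (locally (RtoC (sqrt PI) + RtoC 0)%C));
    [|apply filterlim_Cmult_l].
  apply (filterlim_comp_2 (G := locally (RtoC (sqrt PI))) (H := locally (RtoC 0))
    (fun uv => RtoC (RInt gauss (fst uv) (snd uv)))
    (fun uv => damped_increment (Re b) (Im b) (fst uv) (snd uv)) plus).
  - exact (filterlim_comp _ _ _ _ RtoC _ _ _ filterlim_RInt_gauss (filterlim_RtoC _)).
  - apply filterlim_damped_increment.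
  - apply (filterlim_plus (V := C_R_NormedModule)).
Qed.

Lemma is_RInt_gen_cexp_gauss (b : C) :
  @is_RInt_gen C_R_NormedModule (fun x => cexp (b * RtoC x) * RtoC (gauss x))%C
    (Rbar_locally m_infty) (Rbar_locally p_infty) (RtoC (sqrt PI) * cexp (b * b / RtoC 4))%C.
Proof.
  exact (is_RInt_gen_of_primitive _ _ _ (is_RInt_cexp_gauss b) (filterlim_cgauss_int b)).
Qed.

(** * Exponential moments of the derivatives of the Gaussian *)

Definition cexp_gauss_deriv (b : C) (k : nat) (x : R) : C :=
  (cexp (b * RtoC x) * RtoC (gauss_deriv k x))%C.

Lemma cexp_gauss_deriv_components b k x :
  cexp_gauss_deriv b k x =
  (exp (Re b * x) * cos (Im b * x) * gauss_deriv k x, exp (Re b * x) * sin (Im b * x) * gauss_deriv k x).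
Proof.
  unfold cexp_gauss_deriv, cexp. destruct b as [p q]. unfold Re, Im, RtoC.
  apply injective_projections; simpl; repeat rewrite ?Rmult_0_r, ?Rminus_0_r, ?Rplus_0_l; ring.
Qed.

Lemma cexp_gauss_deriv_vanishes b k : filterlim (cexp_gauss_deriv b k) at_infinity (locally (RtoC 0)).
Proof.
  destruct (gauss_deriv_dominated k) as [M [HM HB]].
  apply (filterlim_of_norm_le (V := C_R_NormedModule) _
    (fun x => M * ((1 + Rabs x) ^ k * exp (Rabs (Re b) * Rabs x - x ^ 2))) (RtoC 0)).
  - apply filter_forall. intros x. rewrite norm_C_R_minus_0.
    unfold cexp_gauss_deriv. rewrite Cmod_mult, Cmod_cexp, Cmod_R.
    replace (Re (b * RtoC x)%C) with (Re b * x) by (destruct b; unfold Re, RtoC; simpl; ring).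
    assert (Hexp : exp (Re b * x) <= exp (Rabs (Re b) * Rabs x)).
    { apply exp_le. rewrite <- Rabs_mult. apply Rle_abs. }
    replace (exp (Rabs (Re b) * Rabs x - x ^ 2)) with (exp (Rabs (Re b) * Rabs x) * gauss x)
      by (unfold gauss; rewrite <- exp_plus; f_equal; ring).
    specialize (HB x). pose proof (exp_pos (Re b * x)). pose proof (Rabs_pos (gauss_deriv k x)).
    apply Rle_trans with (exp (Rabs (Re b) * Rabs x) * (M * (1 + Rabs x) ^ k * gauss x)).
    + apply Rmult_le_compat; lra.
    + right. ring.
  - apply filterlim_mult_0, poly_gauss_decay, Rabs_pos.
Qed.

Lemma is_RInt_cexp_gauss_deriv_S b k u v :
  @is_RInt C_R_NormedModule (fun x => b * cexp_gauss_deriv b k x + cexp_gauss_deriv b (S k) x)%C u v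
    (cexp_gauss_deriv b k v - cexp_gauss_deriv b k u)%C.
Proof.
  apply is_RInt_C_pair; rewrite !cexp_gauss_deriv_components; cbn [Re Im fst snd].
  - apply (is_RInt_ext (fun x => Re b * (exp (Re b * x) * cos (Im b * x) * gauss_deriv k x)
                                - Im b * (exp (Re b * x) * sin (Im b * x) * gauss_deriv k x)
                                + exp (Re b * x) * cos (Im b * x) * gauss_deriv (S k) x)).
    { intros x _. rewrite !cexp_gauss_deriv_components. simpl. unfold Re, Im. retype_eq R. ring. }
    apply (is_RInt_derive (V := R_CompleteNormedModule)
             (fun x => exp (Re b * x) * cos (Im b * x) * gauss_deriv k x)).
    + intros x _. auto_derive; [apply ex_derive_gauss_deriv|]. rewrite <- gauss_deriv_S. retype_eq R. ring.
    + intros x _. apply continuous_of_ex_derive.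
      auto_derive. repeat split; apply ex_derive_gauss_deriv.
  - apply (is_RInt_ext (fun x => Re b * (exp (Re b * x) * sin (Im b * x) * gauss_deriv k x)
                                + Im b * (exp (Re b * x) * cos (Im b * x) * gauss_deriv k x)
                                + exp (Re b * x) * sin (Im b * x) * gauss_deriv (S k) x)).
    { intros x _. rewrite !cexp_gauss_deriv_components. simpl. unfold Re, Im. retype_eq R. ring. }
    apply (is_RInt_derive (V := R_CompleteNormedModule)
             (fun x => exp (Re b * x) * sin (Im b * x) * gauss_deriv k x)).
    + intros x _. auto_derive; [apply ex_derive_gauss_deriv|]. rewrite <- gauss_deriv_S. retype_eq R. ring.
    + intros x _. apply continuous_of_ex_derive.
      auto_derive. repeat split; apply ex_derive_gauss_deriv.
Qed.

Lemma is_RInt_gen_cexp_gauss_deriv b k :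
  @is_RInt_gen C_R_NormedModule (cexp_gauss_deriv b k) (Rbar_locally m_infty) (Rbar_locally p_infty)
    (pow_n (K := C_Ring) (- b)%C k * (RtoC (sqrt PI) * cexp (b * b / RtoC 4)))%C.
Proof.
  set (c := (RtoC (sqrt PI) * cexp (b * b / RtoC 4))%C).
  induction k as [|k IH].
  - replace (pow_n (K := C_Ring) (- b)%C 0 * c)%C with c by (symmetry; apply (mult_one_l (K := C_Ring))).
    exact (is_RInt_gen_cexp_gauss b).
  - pose proof (is_RInt_gen_of_antiderivative _ (cexp_gauss_deriv b k) (RtoC 0) (RtoC 0)
      (is_RInt_cexp_gauss_deriv_S b k)
      (filterlim_filter_le_1 _ at_infinity_le_m_infty (cexp_gauss_deriv_vanishes b k))
      (filterlim_filter_le_1 _ at_infinity_le_p_infty (cexp_gauss_deriv_vanishes b k))) as Hsum.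
    pose proof (is_RInt_gen_minus _ _ _ _ Hsum (is_RInt_gen_Cmult b _ _ IH)) as H.
    replace (pow_n (K := C_Ring) (- b)%C (S k) * c)%C
      with (RtoC 0 - RtoC 0 - b * (pow_n (K := C_Ring) (- b)%C k * c))%C.
    + apply (is_RInt_gen_ext_everywhere
        (fun x => b * cexp_gauss_deriv b k x + cexp_gauss_deriv b (S k) x - b * cexp_gauss_deriv b k x)%C);
        [intros x; retype_eq C; ring | exact H].
    + change (pow_n (K := C_Ring) (- b)%C (S k)) with (- b * pow_n (K := C_Ring) (- b)%C k)%C. ring.
Qed.

(** * The Segal-Bargmann transform of [H_{k,n}] *)

Lemma pow_n_Cmult (a c : C) k :
  pow_n (K := C_Ring) (a * c)%C k = (pow_n (K := C_Ring) a k * pow_n (K := C_Ring) c k)%C.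
Proof.
  induction k as [|k IH].
  - simpl. change (@one C_Ring) with (RtoC 1). ring.
  - change (pow_n (K := C_Ring) ?x (S k)) with (x * pow_n (K := C_Ring) x k)%C. rewrite IH.
    retype_eq C. ring.
Qed.

Lemma pow_n_RtoC r k : pow_n (K := C_Ring) (RtoC r) k = RtoC (r ^ k).
Proof.
  induction k as [|k IH]; [reflexivity|].
  change (pow_n (K := C_Ring) (RtoC r) (S k)) with (RtoC r * pow_n (K := C_Ring) (RtoC r) k)%C.
  rewrite IH, <- RtoC_mult. reflexivity.
Qed.

Lemma sqrt_pow k x : 0 <= x -> sqrt (x ^ k) = sqrt x ^ k.
Proof.
  intros Hx. induction k as [|k IH]; [apply sqrt_1|].
  simpl. rewrite sqrt_mult by (try apply pow_le; lra). rewrite IH. reflexivity.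
Qed.

Lemma sqrt_sqrt_PI : sqrt (sqrt PI) = Rpower PI (1 / 4).
Proof.
  pose proof PI_RGT_0.
  rewrite <- (Rpower_sqrt PI), <- Rpower_sqrt by (try unfold Rpower; try apply exp_pos; lra).
  rewrite Rpower_mult. f_equal. field.
Qed.

Lemma hermite_fun_mul_exp k x :
  hermite_fun k x * exp (- (x * x) / 2) =
  / sqrt (2 ^ k * INR (fact k) * sqrt PI) * (-1) ^ k * gauss_deriv k x.
Proof.
  unfold hermite_fun, hermiteH.
  change (Derive_n (fun t => exp (- t ^ 2)) k x) with (gauss_deriv k x).
  assert (E : exp (x ^ 2) * exp (- x ^ 2 / 2) * exp (- (x * x) / 2) = 1).
  { rewrite <- !exp_plus, <- exp_0. f_equal. field. }
  transitivity (/ sqrt (2 ^ k * INR (fact k) * sqrt PI) * (-1) ^ k * gauss_deriv k x *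
    (exp (x ^ 2) * exp (- x ^ 2 / 2) * exp (- (x * x) / 2))); [ring | rewrite E; ring].
Qed.

Definition sb_prefactor (k : nat) (z : C) : C :=
  (RtoC (/ Rpower PI (1 / 4) * / sqrt (2 ^ k * INR (fact k) * sqrt PI) * (-1) ^ k)
   * cexp (- (z * z) / RtoC 2))%C.

Definition sb_exponent (z : C) (l : R) : C := (RtoC (sqrt 2) * z + Ci * RtoC l)%C.

Lemma SB_integrand_Hkn k n a z x :
  SB_integrand (Hkn k n a) z x =
  sum_n (fun j => RtoC (Ccoef n j a) *
                  (sb_prefactor k z * cexp_gauss_deriv (sb_exponent z (lam n j)) k x))%C n.
Proof.
  unfold SB_integrand, Hkn, Defs.Fn. rewrite Cmult_assoc, <- (sum_n_mult_l (K := C_Ring)).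
  apply sum_n_ext. intros j. change (@mult C_Ring) with Cmult.
  unfold sb_prefactor, cexp_gauss_deriv, sb_exponent.
  assert (Hsplit : (cexp (- (z * z + RtoC (x * x)) / RtoC 2 + RtoC (sqrt 2) * z * RtoC x)
                    * cexp (Ci * RtoC (lam n j * x)))%C =
    (cexp (- (z * z) / RtoC 2) * cexp ((RtoC (sqrt 2) * z + Ci * RtoC (lam n j)) * RtoC x)
     * RtoC (exp (- (x * x) / 2)))%C).
  { rewrite <- cexp_RtoC, <- !cexp_plus. f_equal.
    assert (RtoC 2 <> RtoC 0) by (intros H; apply RtoC_inj in H; lra).
    rewrite RtoC_div, RtoC_opp, !RtoC_mult by lra. field; auto. }
  transitivity (RtoC (/ Rpower PI (1 / 4)) * RtoC (Ccoef n j a) * RtoC (hermite_fun k x) *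
    (cexp (- (z * z + RtoC (x * x)) / RtoC 2 + RtoC (sqrt 2) * z * RtoC x)
     * cexp (Ci * RtoC (lam n j * x))))%C; [retype_eq C; ring|].
  rewrite Hsplit.
  transitivity (RtoC (/ Rpower PI (1 / 4)) * RtoC (Ccoef n j a)
    * RtoC (hermite_fun k x * exp (- (x * x) / 2))
    * cexp (- (z * z) / RtoC 2) * cexp ((RtoC (sqrt 2) * z + Ci * RtoC (lam n j)) * RtoC x))%C;
    [rewrite RtoC_mult; retype_eq C; ring|].
  rewrite hermite_fun_mul_exp, !RtoC_mult. retype_eq C. ring.
Qed.

Lemma sb_normalization k :
  / Rpower PI (1 / 4) * / sqrt (2 ^ k * INR (fact k) * sqrt PI) * (-1) ^ k * (- sqrt 2) ^ k * sqrt PI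
  = / sqrt (INR (fact k)).
Proof.
  pose proof PI_RGT_0.
  assert (Hf : 0 < INR (fact k)) by (apply lt_0_INR, lt_O_fact).
  assert (Hs2 : 0 < sqrt 2) by (apply sqrt_lt_R0; lra).
  assert (Hq : Rpower PI (1 / 4) * Rpower PI (1 / 4) = sqrt PI)
    by (rewrite <- sqrt_sqrt_PI; apply sqrt_sqrt, sqrt_pos).
  assert (Hq0 : 0 < Rpower PI (1 / 4)) by (unfold Rpower; apply exp_pos).
  assert (Hsk : 0 < sqrt 2 ^ k) by (apply pow_lt; auto).
  assert (Hfk : 0 < sqrt (INR (fact k))) by (apply sqrt_lt_R0; auto).
  assert (Hm : (-1) ^ k * (- sqrt 2) ^ k = sqrt 2 ^ k) by (rewrite <- Rpow_mult_distr; f_equal; ring).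
  rewrite !sqrt_mult, sqrt_pow, sqrt_sqrt_PI by (try apply Rmult_le_pos; try apply pow_le;
    try apply sqrt_pos; lra).
  rewrite Rmult_assoc with (r2 := (-1) ^ k), Hm, <- Hq. field. repeat split; lra.
Qed.

Lemma cexp_sb_exponent_sqr (z : C) (l : R) :
  (cexp (- (z * z) / RtoC 2) * cexp (sb_exponent z l * sb_exponent z l / RtoC 4))%C
  = cexp (Ci * z / RtoC (sqrt 2) * RtoC l - RtoC (/ 4 * l ^ 2))%C.
Proof.
  rewrite <- cexp_plus. f_equal. unfold sb_exponent.
  assert (Hs0 : RtoC (sqrt 2) <> RtoC 0)
    by (intros H; apply RtoC_inj in H; pose proof (sqrt_lt_R0 2 ltac:(lra)); lra).
  set (s := RtoC (sqrt 2)) in *.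
  assert (H2 : RtoC 2 = (s * s)%C) by (unfold s; rewrite <- RtoC_mult, sqrt_sqrt by lra; reflexivity).
  assert (Hi : (Ci * Ci)%C = (- RtoC 1)%C) by (apply injective_projections; simpl; ring).
  assert (H4 : RtoC 4 = (s * s * (s * s))%C) by (rewrite <- H2, <- RtoC_mult; f_equal; ring).
  replace (RtoC (/ 4 * l ^ 2)) with (RtoC l * RtoC l / RtoC 4)%C
    by (rewrite <- RtoC_mult, <- RtoC_div by lra; f_equal; field).
  rewrite H4, H2.
  transitivity (- (z * z) / (s * s) + (s * s * z * z + (Ci * Ci) * RtoC l * RtoC l
                + RtoC 2 * s * z * Ci * RtoC l) / (s * s * (s * s)))%C; [field; auto|].
  rewrite Hi, H2. field; auto.
Qed.

Lemma sb_moment k (z : C) (l : R) :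
  (sb_prefactor k z * (pow_n (K := C_Ring) (- sb_exponent z l)%C k
     * (RtoC (sqrt PI) * cexp (sb_exponent z l * sb_exponent z l / RtoC 4))))%C =
  (RtoC (/ sqrt (INR (fact k))) * pow_n (z + Ci / RtoC (sqrt 2) * RtoC l) k
   * cexp (Ci * z / RtoC (sqrt 2) * RtoC l - RtoC (/ 4 * l ^ 2)))%C.
Proof.
  assert (Hs0 : RtoC (sqrt 2) <> RtoC 0)
    by (intros H; apply RtoC_inj in H; pose proof (sqrt_lt_R0 2 ltac:(lra)); lra).
  replace (- sb_exponent z l)%C with (RtoC (- sqrt 2) * (z + Ci / RtoC (sqrt 2) * RtoC l))%C
    by (unfold sb_exponent; rewrite RtoC_opp; field; auto).
  rewrite pow_n_Cmult, pow_n_RtoC, <- sb_normalization, <- cexp_sb_exponent_sqr.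
  unfold sb_prefactor. rewrite !RtoC_mult. retype_eq C. ring.
Qed.

Theorem theorem3p19 (a : R) (k n : nat) (z : C) :
  1 < a -> (1 <= n)%nat ->
  is_SegalBargmann (Hkn k n a) z
    ((RtoC (/ sqrt (INR (fact k))) *
      sum_n (fun j =>
        RtoC (Ccoef n j a) *
        pow_n (z + Ci / RtoC (sqrt 2) * RtoC (lam n j)) k *
        cexp (Ci * z / RtoC (sqrt 2) * RtoC (lam n j)
              - RtoC (/ 4 * (lam n j) ^ 2))) n)%C).
Proof.
  intros _ _.
  unfold is_SegalBargmann.
  eapply is_RInt_gen_ext_everywhere; [intros x; symmetry; apply SB_integrand_Hkn|].
  match goal with |- is_RInt_gen _ _ _ ?l => replace l with
    (sum_n (fun j => RtoC (Ccoef n j a) * (sb_prefactor k z *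
       (pow_n (K := C_Ring) (- sb_exponent z (lam n j))%C k * (RtoC (sqrt PI)
        * cexp (sb_exponent z (lam n j) * sb_exponent z (lam n j) / RtoC 4)))))%C n) end.
  - apply (is_RInt_gen_sum_n (fun j x => RtoC (Ccoef n j a) *
      (sb_prefactor k z * cexp_gauss_deriv (sb_exponent z (lam n j)) k x))%C).
    intros j _.
    apply (is_RInt_gen_Cmult (RtoC (Ccoef n j a))), (is_RInt_gen_Cmult (sb_prefactor k z)),
      is_RInt_gen_cexp_gauss_deriv.
  - rewrite <- (sum_n_mult_l (K := C_Ring)). apply sum_n_ext. intros j.
    change (@mult C_Ring) with Cmult. rewrite sb_moment. retype_eq C. ring.
Qed.
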